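(* Let $\mathcal{M}=(\Sigma,\Gamma,\mathcal{H},U,M)$ be a real QMM (all matrices $U_\sigma$ and $M_\gamma$ have real entries with respect to a fixed basis), let $n=\dim\mathcal{H}$, and let $\rho_s,\rho_t$ be density operators on $\mathcal{H}$ (not necessarily real). Then for every $k\in\mathbb{N}$, $\rho_s\sim_k\rho_t\iff\rho_s\sim_k^{\frac12 n(n+1)-1}\rho_t$, and $\rho_s\sim\rho_t\iff\rho_s\sim^{\frac12 n(n+1)-1}\rho_t$.
   Context: A quantum Mealy machine (QMM) is a tuple $\mathcal{M}=(\Sigma,\Gamma,\mathcal{H},U,M)$ where $\Sigma,\Gamma$ are finite alphabets, $\mathcal{H}$ a finite-dimensional complex Hilbert space, $U=\{U_\sigma\}_{\sigma\in\Sigma}$ unitary operators on $\mathcal{H}$, $M=\{M_\gamma\}_{\gamma\in\Gamma}$ linear operators with $\sum_\gamma M_\gamma^\dagger M_\gamma=I$. For a word $a$, $|a|$ is its length, $a[l:r]=a[l]\cdots a[r]$ (empty if $l>r$), $U_a=U_{a[|a|]}\cdots U_{a[1]}$, $U_\epsilon=I$. A scheduler for $a\in\Sigma^*$ is a finite non-decreasing integer sequence $\mathcal{S}=(s_1\le\dots\le s_{|\mathcal{S}|})$ in $\{0,\dots,|a|\}$ (possibly empty). With $s_0=0$, $s_{|\mathcal{S}|+1}=|a|$, $a_i=a[s_{i-1}+1:s_i]$. For $b\in\Gamma^{|\mathcal{S}|}$, $V_{b|a,\mathcal{S}}=U_{a_{|\mathcal{S}|+1}}M_{b_{|\mathcal{S}|}}U_{a_{|\mathcal{S}|}}\cdots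 M_{b_1}U_{a_1}$ and $\Pr^{\mathcal{M}}_\rho(b|a,\mathcal{S})=\operatorname{tr}(V_{b|a,\mathcal{S}}\rho V_{b|a,\mathcal{S}}^\dagger)$. $\rho_s\sim\rho_t$ means $\Pr_{\rho_s}^{\mathcal{M}}(b|a,\mathcal{S})=\Pr_{\rho_t}^{\mathcal{M}}(b|a,\mathcal{S})$ for all $a,\mathcal{S},b$; $\sim_k$ restricts to $|\mathcal{S}|\le k$; $\sim^m$ restricts to $|a|+|\mathcal{S}|\le m$; $\sim^m_k$ restricts to both $|\mathcal{S}|\le k$ and $|a|+|\mathcal{S}|\le m$. *)

(* Complex scalars: an arbitrary numClosedFieldType C
   (e.g. algC); the Hilbert space H is C^n with its standard basis. *)
From HB Require Import structures.
From mathcomp Require Import all_boot all_order all_algebra.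
Set Implicit Arguments. Unset Strict Implicit. Unset Printing Implicit Defensive.
Import Order.TTheory GRing.Theory Num.Theory.
Local Open Scope ring_scope.

Section QMM.
Variable C : numClosedFieldType.
Variable n : nat.

Definition adj (p q : nat) (A : 'M[C]_(p, q)) : 'M[C]_(q, p) :=
  (map_mx Num.conj A)^T.

Definition unitary (A : 'M[C]_n) : Prop :=
  A *m adj A = 1%:M /\ adj A *m A = 1%:M.

Definition real_mx (A : 'M[C]_n) : Prop := forall i j, A i j \is Num.real.

Definition density (rho : 'M[C]_n) : Prop :=
  [/\ adj rho = rho,
      (forall v : 'cV[C]_n, 0 <= (adj v *m rho *m v) 0 0)
    & \tr rho = 1].

Variables (Sigma Gamma : finType).
Variable U : Sigma -> 'M[C]_n.
Variable M : Gamma -> 'M[C]_n.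

Definition QMM : Prop :=
  (forall s, unitary (U s)) /\ \sum_(g : Gamma) adj (M g) *m M g = 1%:M.

Definition real_QMM : Prop :=
  QMM /\ (forall s, real_mx (U s)) /\ (forall g, real_mx (M g)).

(* U_w = U_{w[|w|]} ... U_{w[1]}, U_eps = I *)
Definition Uword (w : seq Sigma) : 'M[C]_n :=
  foldl (fun acc s => U s *m acc) 1%:M w.

(* a[l:r] with 1-based l, r; here the segment a[p+1 : q] *)
Definition segment (a : seq Sigma) (p q : nat) : seq Sigma :=
  drop p (take q a).

Definition scheduler (a : seq Sigma) (S : seq nat) : bool :=
  sorted leq S && all (fun s => s <= size a)%N S.

(* V_{b|a,S} = U_{a_{|S|+1}} M_{b_|S|} U_{a_|S|} ... M_{b_1} U_{a_1} *)
Fixpoint Vaux (a : seq Sigma) (prev : nat) (S : seq nat) (b : seq Gamma)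
  : 'M[C]_n :=
  match S, b with
  | s :: S', g :: b' => Vaux a s S' b' *m (M g *m Uword (segment a prev s))
  | _, _ => Uword (drop prev a)
  end.

Definition Vmat (b : seq Gamma) (a : seq Sigma) (S : seq nat) : 'M[C]_n :=
  Vaux a 0 S b.

Definition Pr (rho : 'M[C]_n) (b : seq Gamma) (a : seq Sigma) (S : seq nat)
  : C := \tr (Vmat b a S *m rho *m adj (Vmat b a S)).

Definition equiv_restr (P : nat -> nat -> bool) (rs rt : 'M[C]_n) : Prop :=
  forall (a : seq Sigma) (S : seq nat) (b : seq Gamma),
    scheduler a S -> size b = size S -> P (size S) (size a + size S)%N ->
    Pr rs b a S = Pr rt b a S.

Definition qequiv := equiv_restr (fun _ _ => true).
Definition qequiv_k (k : nat) := equiv_restr (fun l _ => l <= k)%N.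
Definition qequiv_m (m : nat) := equiv_restr (fun _ t => t <= m)%N.
Definition qequiv_km (k m : nat) :=
  equiv_restr (fun l t => (l <= k) && (t <= m))%N.

End QMM.

From HB Require Import structures.
From mathcomp Require Import all_boot all_order all_algebra.
Import Order.TTheory GRing.Theory Num.Theory.
Local Open Scope ring_scope.

(* Merge the input word a, the scheduler S and the outcomes b into a single
   word w over the alphabet Sigma + Gamma; then V_{b|a,S} is the product of
   the matrices of the letters of w, and Pr_rho(b|a,S) = tr (X_w rho) with
   X_w = V^dagger V.  Hence rho_s ~ rho_t on a class of words iff the vector
   rho_s - rho_t annihilates (via the trace form) every X_w of that class.
   Let Sp t l be the span of the X_w with |w| <= t and at most l measurement
   letters.  These spaces satisfy a two-parameter Krylov recursion, so once
   Sp (t+1) l = Sp t l and the level l-1 has stabilised, level l is stable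
   forever; by induction on l the stabilisation index is strictly smaller
   than the dimension.  For a real machine every X_w is a real symmetric
   matrix, so all these spaces live in the symmetric matrices, of dimension
   n(n+1)/2; thus words of length n(n+1)/2 - 1 already span everything. *)

Set Implicit Arguments. Unset Strict Implicit. Unset Printing Implicit Defensive.

Section Words.
Variable C : numClosedFieldType.
Variable n : nat.
Variables (Sigma Gamma : finType).
Variable U : Sigma -> 'M[C]_n.
Variable M : Gamma -> 'M[C]_n.

Definition letter_mx (o : Sigma + Gamma) : 'M[C]_n :=
  match o with inl s => U s | inr g => M g end.

Definition word_mx (w : seq (Sigma + Gamma)) : 'M[C]_n :=
  foldl (fun acc o => letter_mx o *m acc) 1%:M w.

Lemma foldl_word_mx w (A : 'M[C]_n) :
  foldl (fun acc o => letter_mx o *m acc) A w = word_mx w *m A.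
Proof.
rewrite /word_mx; elim: w A => [|o w IH] A /=; first by rewrite mul1mx.
by rewrite IH [in RHS]IH mulmx1 mulmxA.
Qed.

Lemma word_mx_cons o w : word_mx (o :: w) = word_mx w *m letter_mx o.
Proof. by rewrite {1}/word_mx /= foldl_word_mx mulmx1. Qed.

Lemma word_mx_cat w1 w2 : word_mx (w1 ++ w2) = word_mx w2 *m word_mx w1.
Proof. by rewrite {1}/word_mx foldl_cat foldl_word_mx. Qed.

Lemma Uword_word_mx a : Uword U a = word_mx (map inl a).
Proof.
rewrite /Uword /word_mx; elim: a (1%:M : 'M[C]_n) => [|s a IH] A //=.
Qed.

Definition is_outcome (o : Sigma + Gamma) : bool :=
  if o is inr _ then true else false.

Fixpoint encode (a : seq Sigma) (prev : nat) (S : seq nat) (b : seq Gamma)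
  : seq (Sigma + Gamma) :=
  match S, b with
  | s :: S', g :: b' => map inl (segment a prev s) ++ inr g :: encode a s S' b'
  | _, _ => map inl (drop prev a)
  end.

Lemma Vaux_encode a prev S b : Vaux U M a prev S b = word_mx (encode a prev S b).
Proof.
elim: S prev b => [|s S IH] prev [|g b] //=; rewrite ?Uword_word_mx //.
by rewrite word_mx_cat word_mx_cons IH mulmxA.
Qed.

Lemma count_map_inl (s : seq Sigma) :
  count is_outcome (map inl s : seq (Sigma + Gamma)) = 0%N.
Proof. by rewrite count_map (@eq_count _ _ pred0) ?count_pred0. Qed.

Lemma count_encode a prev S b : (count is_outcome (encode a prev S b) <= size S)%N.
Proof.
elim: S prev b => [|s S IH] prev [|g b] /=; rewrite ?count_map_inl //.
by rewrite count_cat count_map_inl /=; exact: IH.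
Qed.

(* Conversely every word is an encoding: [decode p w] reads off the input
   symbols, the scheduler (positions shifted by p) and the outcomes. *)
Fixpoint decode (p : nat) (w : seq (Sigma + Gamma))
  : seq Sigma * seq nat * seq Gamma :=
  match w with
  | [::] => ([::], [::], [::])
  | inl s :: w' => let: (a, sch, b) := decode p.+1 w' in (s :: a, sch, b)
  | inr g :: w' => let: (a, sch, b) := decode p w' in (a, p :: sch, g :: b)
  end.

Lemma decode_sizes w p :
  let: (a, sch, b) := decode p w in
  [/\ size b = size sch, (size a + size sch = size w)%N,
      size sch = count is_outcome w, sorted leq sch
    & all (fun s => p <= s)%N sch && all (fun s => s <= p + size a)%N sch].
Proof.
elim: w p => [|[s|g] w IH] p //=.
- have := IH p.+1; case: (decode p.+1 w) => [[a sch] b] [h1 h2 h3 h4 /andP[h5 h6]].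
  split => //=; first by rewrite addSn h2.
  apply/andP; split.
  + by apply/allP => x /(allP h5) /ltnW.
  + by apply/allP => x /(allP h6); rewrite addSnnS.
- have := IH p; case: (decode p w) => [[a sch] b] [h1 h2 h3 h4 /andP[h5 h6]].
  split => //=; first by rewrite h1.
  + by rewrite addnS h2.
  + by rewrite h3.
  + by rewrite path_sortedE ?h4 ?h5 //; exact: leq_trans.
  + by rewrite leqnn h5 leq_addr h6.
Qed.

Lemma encode_decode w p (pre : seq Sigma) : size pre = p ->
  let: (a, sch, b) := decode p w in encode (pre ++ a) p sch b = w.
Proof.
elim: w p pre => [|[s|g] w IH] p pre Hp /=.
- by rewrite cats0 drop_oversize // Hp.
- have := IH p.+1 (rcons pre s); rewrite size_rcons Hp => /(_ erefl).
  have := decode_sizes w p.+1.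
  case: (decode p.+1 w) => [[a sch] b] [_ _ _ _ /andP[hS _]].
  rewrite cat_rcons => IHw; set A := pre ++ s :: a.
  have dropA : drop p A = s :: a by rewrite /A drop_size_cat.
  have dropA1 : drop p.+1 A = a.
    by rewrite /A drop_cat Hp ltnNge leqnSn /= subSnn /= drop0.
  move: IHw hS; case: sch => [|x sch]; case: b => [|g b] /=;
    rewrite ?dropA ?dropA1 //= => <- // /andP[hx _].
  have takeA : take x A = pre ++ s :: take (x - p.+1) a.
    by rewrite /A take_cat Hp ltnNge (ltnW hx) /= -subnSK // subSS.
  by rewrite /segment takeA drop_size_cat // drop_cat Hp ltnNge leqnSn /= subSnn /= drop0.
- have := IH p pre Hp; case: (decode p w) => [[a sch] b] /= <-.
  by rewrite /segment take_cat Hp ltnn subnn take0 cats0 -Hp drop_size.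
Qed.

Lemma decodeP w : let: (a, sch, b) := decode 0 w in
  [/\ encode a 0 sch b = w, scheduler a sch, size b = size sch,
      (size a + size sch = size w)%N & size sch = count is_outcome w].
Proof.
have := decode_sizes w 0; have := @encode_decode w 0 [::] erefl.
case: (decode 0 w) => [[a sch] b] /= Hw [h1 h2 h3 h4 /andP[_ h6]].
by split => //; rewrite /scheduler h4.
Qed.

End Words.
Arguments is_outcome {Sigma Gamma}.
Arguments decode {Sigma Gamma}.

Lemma adj_mul (C : numClosedFieldType) (n : nat) (A B : 'M[C]_n) :
  adj (A *m B) = adj B *m adj A.
Proof. by rewrite /adj map_mxM trmx_mul. Qed.

Lemma adj_real (C : numClosedFieldType) (n : nat) (A : 'M[C]_n) :
  real_mx A -> adj A = A^T.
Proof. by move=> HA; congr trmx; apply/matrixP => i j; rewrite mxE conj_Creal. Qed.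

Section Spans.
Variable C : numClosedFieldType.
Variable n : nat.
Variables (Sigma Gamma : finType).
Variable U : Sigma -> 'M[C]_n.
Variable M : Gamma -> 'M[C]_n.

Local Notation letter_mx := (letter_mx U M).
Local Notation word_mx := (word_mx U M).

Definition word_obs w := adj (word_mx w) *m word_mx w.

Lemma word_obs_nil : word_obs [::] = 1%:M.
Proof. by rewrite /word_obs /word_mx /= /adj map_mx1 trmx1 mulmx1. Qed.

Lemma word_obs_cons o w :
  word_obs (o :: w) = adj (letter_mx o) *m word_obs w *m letter_mx o.
Proof. by rewrite /word_obs word_mx_cons adj_mul !mulmxA. Qed.

Lemma Pr_word_obs rho b a S :
  Pr U M rho b a S = \tr (word_obs (encode a 0 S b) *m rho).
Proof. by rewrite /Pr /Vmat Vaux_encode mxtrace_mulC /word_obs mulmxA. Qed.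

Definition conj_op (A : 'M[C]_n) : 'M[C]_(n * n) :=
  lin_mulmx (adj A) *m lin_mulmxr A.

Lemma conj_opE X A : mxvec X *m conj_op A = mxvec (adj A *m X *m A).
Proof. by rewrite /conj_op /lin_mulmx /lin_mulmxr mulmxA !mul_vec_lin. Qed.

(* obs_span t l: span of the X_w with |w| <= t and at most l outcomes,
   defined by the recursion X_{o w} = A_o^dagger X_w A_o. *)
Fixpoint obs_span (t l : nat) : 'M[C]_(n * n) :=
  match t with
  | 0 => <<mxvec (1%:M : 'M[C]_n)>>%MS
  | t'.+1 => (obs_span t' l + (\sum_(s : Sigma) (obs_span t' l *m conj_op (U s))) +
      match l with
      | 0 => 0
      | l'.+1 => \sum_(g : Gamma) (obs_span t' l' *m conj_op (M g))
      end)%MS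
  end.

Lemma obs_span_succ t l : (obs_span t l <= obs_span t.+1 l)%MS.
Proof. by rewrite /= -addsmxA addsmxSl. Qed.

Lemma obs_span_mono t1 t2 l : (t1 <= t2)%N -> (obs_span t1 l <= obs_span t2 l)%MS.
Proof.
move/subnKC <-; elim: (t2 - t1)%N => [|d IH]; first by rewrite addn0.
by apply: submx_trans IH _; rewrite addnS obs_span_succ.
Qed.

Lemma obs_span_monol t l : (obs_span t l <= obs_span t l.+1)%MS.
Proof.
elim: t l => [|t IH] l //=.
apply: addsmxS; first apply: addsmxS.
- exact: IH.
- by apply: sumsmxS => s _; apply: submxMr.
- case: l => [|l]; first exact: sub0mx.
  by apply: sumsmxS => g _; apply: submxMr.
Qed.

Lemma word_obs_in_span t l w : (count is_outcome w <= l)%N -> (size w <= t)%N ->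
  (mxvec (word_obs w) <= obs_span t l)%MS.
Proof.
elim: t l w => [|t IH] l [|o w] //= hc hs.
- by rewrite word_obs_nil genmxE.
- by apply: submx_trans (obs_span_succ _ _); rewrite (IH l [::]).
- rewrite word_obs_cons -conj_opE -addsmxA; case: o hc => [s|g] /= hc.
  + apply: submx_trans (addsmxSr _ _); apply: submx_trans (addsmxSl _ _).
    by apply: (sumsmx_sup s) => //; apply: submxMr; exact: IH.
  + case: l hc => [|l] // hc.
    apply: submx_trans (addsmxSr _ _); apply: submx_trans (addsmxSr _ _).
    by apply: (sumsmx_sup g) => //; apply: submxMr; exact: IH.
Qed.

Lemma obs_span_ann t l (c : 'cV[C]_(n * n)) :
  (forall w, (count is_outcome w <= l)%N -> (size w <= t)%N ->
     mxvec (word_obs w) *m c = 0) ->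
  obs_span t l *m c = 0.
Proof.
elim: t l c => [|t IH] l c H; apply/sub_kermxP.
  by rewrite /= genmxE; apply/sub_kermxP; rewrite -word_obs_nil; apply: H.
rewrite /= !addsmx_sub; apply/andP; split; first (apply/andP; split).
- by apply/sub_kermxP; apply: IH => w hc hs; apply: H => //; exact: leqW.
- apply/sumsmx_subP => s _; apply/sub_kermxP; rewrite -mulmxA; apply: IH => w hc hs.
  by rewrite mulmxA conj_opE -[U s]/(letter_mx (inl s)) -word_obs_cons; apply: H.
- case: l H => [|l] H; first exact: sub0mx.
  apply/sumsmx_subP => g _; apply/sub_kermxP; rewrite -mulmxA; apply: IH => w hc hs.
  by rewrite mulmxA conj_opE -[M g]/(letter_mx (inr g)) -word_obs_cons; apply: H.
Qed.

Lemma obs_span_step t l : (obs_span t.+1 l <= obs_span t l)%MS ->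
  (if l is l'.+1 then (obs_span t.+1 l' <= obs_span t l')%MS else True) ->
  (obs_span t.+2 l <= obs_span t.+1 l)%MS.
Proof.
move=> hl hl'; rewrite [obs_span t.+2 l]/= addsmx_sub.
apply/andP; split; first (rewrite addsmx_sub; apply/andP; split).
- exact: submx_refl.
- apply/sumsmx_subP => s _; apply: submx_trans (submxMr _ hl) _.
  rewrite [obs_span t.+1 _]/= -addsmxA.
  apply: submx_trans (addsmxSr _ _); apply: submx_trans (addsmxSl _ _).
  exact: (sumsmx_sup s).
- case: l hl hl' => [|l] hl hl'; first exact: sub0mx.
  apply/sumsmx_subP => g _; apply: submx_trans (submxMr _ hl') _.
  rewrite [obs_span t.+1 _]/= -addsmxA.
  apply: submx_trans (addsmxSr _ _); apply: submx_trans (addsmxSr _ _).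
  exact: (sumsmx_sup g).
Qed.

End Spans.

Section Stabilisation.
Variable C : numClosedFieldType.
Variable n : nat.
Variables (Sigma Gamma : finType).
Variable U : Sigma -> 'M[C]_n.
Variable M : Gamma -> 'M[C]_n.

Local Notation obs_span := (obs_span U M).

Definition stable (l tau : nat) :=
  forall t, (tau <= t)%N -> (obs_span t l <= obs_span tau l)%MS.

Definition stable_below (l tau : nat) :=
  if l is l'.+1 then stable l' tau else True.

Lemma stable_from_step l tau' tau : (tau' <= tau)%N -> stable_below l tau' ->
  (obs_span tau.+1 l <= obs_span tau l)%MS -> stable l tau.
Proof.
move=> le hbelow h0.
have step j : (obs_span (tau + j).+1 l <= obs_span (tau + j) l)%MS.
  elim: j => [|j IH]; first by rewrite addn0.
  rewrite addnS; apply: obs_span_step => //.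
  case: l hbelow {h0 IH} => [|l] // hbelow.
  have le_j : (tau' <= tau + j)%N by apply: leq_trans le (leq_addr _ _).
  apply: submx_trans (hbelow _ (leqW le_j)) _.
  exact: obs_span_mono.
move=> t /subnKC <-; elim: (t - tau)%N => [|d IH]; first by rewrite addn0.
by apply: submx_trans IH; rewrite addnS.
Qed.

(* Before stabilisation the rank grows by at least one per step, so
   stabilisation happens within dim(matrices) steps. *)
Lemma stabilise_with_rank_growth l tau0 : stable_below l tau0 ->
  exists i, stable l (tau0 + i) /\
    (\rank (obs_span tau0 l) + i <= \rank (obs_span (tau0 + i) l))%N.
Proof.
move=> hbelow.
have grow j : (exists i, stable l (tau0 + i) /\
     (\rank (obs_span tau0 l) + i <= \rank (obs_span (tau0 + i) l))%N) \/
   (\rank (obs_span tau0 l) + j <= \rank (obs_span (tau0 + j) l))%N.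
  elim: j => [|j [|IH]]; [by right; rewrite !addn0 | by left |].
  have [hs|hs] := boolP (obs_span (tau0 + j).+1 l <= obs_span (tau0 + j) l)%MS.
    by left; exists j; split => //; apply: stable_from_step hbelow hs; rewrite leq_addr.
  right; have : (obs_span (tau0 + j) l < obs_span (tau0 + j).+1 l)%MS.
    by rewrite ltmxE obs_span_succ hs.
  rewrite ltmxErank => /andP[_ hr].
  by rewrite addnS [(tau0 + j.+1)%N]addnS; apply: leq_ltn_trans IH hr.
have [//|too_big] := grow (n * n).+1; exfalso.
have := leq_trans too_big (rank_leq_col _).
by rewrite addnS ltnNge leq_addl.
Qed.

Lemma rank_obs_span0 : (0 < n)%N -> (0 < \rank (obs_span 0 0))%N.
Proof.
move=> n0; rewrite /= genmxE lt0n mxrank_eq0 mxvec_eq0.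
apply/negP => /eqP /matrixP /(_ (Ordinal n0) (Ordinal n0)).
by rewrite !mxE eqxx /= => /eqP; rewrite oner_eq0.
Qed.

Lemma stable_below_rank l : (0 < n)%N ->
  exists tau, stable l tau /\ (tau < \rank (obs_span tau l))%N.
Proof.
move=> n0; elim: l => [|l [tau' [hs hr]]].
  have [i [hs hr]] := @stabilise_with_rank_growth 0 0 I.
  exists i; split => //; apply: leq_trans hr.
  by rewrite -add1n leq_add2r rank_obs_span0.
have [i [hs' hr']] := @stabilise_with_rank_growth l.+1 tau' hs.
exists (tau' + i)%N; split => //; apply: leq_trans hr'.
rewrite -addSn leq_add2r; apply: leq_trans hr _.
exact/mxrankS/obs_span_monol.
Qed.

Lemma obs_span_saturated l m : (0 < n)%N ->
  (forall t, \rank (obs_span t l) <= m.+1)%N ->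
  forall t, (obs_span t l <= obs_span m l)%MS.
Proof.
move=> n0 hrank t.
have [tau [hs hr]] := stable_below_rank l n0.
have le_tau : (tau <= m)%N by rewrite -ltnS; apply: leq_trans hr (hrank _).
have [le_t|lt_t] := leqP t m; first exact: obs_span_mono.
apply: submx_trans (hs t (leq_trans le_tau (ltnW lt_t))) _.
exact: obs_span_mono.
Qed.

End Stabilisation.

Section Symmetric.
Variable F : fieldType.
Variable n : nat.

Definition transpose_op : 'M[F]_(n * n) := lin_mx (@trmx F n n).

Lemma transpose_opE X : mxvec X *m transpose_op = mxvec X^T.
Proof. exact: mul_vec_lin. Qed.

Definition sym_space := kermx (transpose_op - 1%:M).

Lemma sub_sym_space m (B : 'M[F]_(m, n * n)) :
  (B <= sym_space)%MS = (B *m transpose_op == B).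
Proof. by rewrite sub_kermx mulmxBr mulmx1 subr_eq0. Qed.

(* Indices (i, j) with i <= j: a symmetric matrix is determined by these
   entries, and there are n(n+1)/2 of them. *)
Definition upper_idx : {set 'I_n * 'I_n} := [set p : 'I_n * 'I_n | (p.1 <= p.2)%N].

Lemma card_upper_idx : #|upper_idx| = (n * n.+1)./2.
Proof.
pose lower_idx : {set 'I_n * 'I_n} := [set p : 'I_n * 'I_n | (p.2 <= p.1)%N].
have swap : lower_idx = (fun p : 'I_n * 'I_n => (p.2, p.1)) @: upper_idx.
  apply/setP => p; rewrite inE; apply/idP/imsetP => [hp|[q hq ->]].
    by exists (p.2, p.1); rewrite ?inE //; case: p {hp}.
  by rewrite inE in hq.
have card_lower : #|lower_idx| = #|upper_idx|.
  by rewrite swap; apply: card_imset => [[a b] [c d]] [-> ->].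
have cup : upper_idx :|: lower_idx = setT by apply/setP => p; rewrite !inE leq_total.
have cap : upper_idx :&: lower_idx = [set (i, i) | i : 'I_n].
  apply/setP => [[i j]]; rewrite !inE /=; apply/andP/imsetP => [[h1 h2]|[k _ [-> ->]]].
    by exists i => //; congr pair; apply/val_inj/eqP; rewrite eqn_leq h1 h2.
  by rewrite leqnn.
have := cardsUI upper_idx lower_idx.
rewrite cup cap card_lower cardsT card_prod card_ord card_imset; last by move=> a b [].
by rewrite addnn card_ord mulnS addnC => ->; rewrite doubleK.
Qed.

Definition upper_proj : 'M[F]_(n * n, #|upper_idx|) :=
  \matrix_(r, q) ((r == mxvec_index (enum_val q).1 (enum_val q).2)%:R).

Lemma upper_projE X q :
  (mxvec X *m upper_proj) 0 q = X (enum_val q).1 (enum_val q).2.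
Proof.
rewrite mxE (bigD1 (mxvec_index (enum_val q).1 (enum_val q).2)) //= mxE eqxx mulr1.
by rewrite mxvecE big1 ?addr0 // => r /negbTE hr; rewrite mxE hr mulr0.
Qed.

Lemma upper_proj_inj (u : 'rV[F]_(n * n)) :
  (u <= sym_space)%MS -> u *m upper_proj = 0 -> u = 0.
Proof.
move=> hsym hproj; rewrite -(vec_mxK u); set X := vec_mx u.
have symX : X^T = X.
  apply: (can_inj mxvecK); rewrite -transpose_opE /X vec_mxK.
  by apply/eqP; rewrite -sub_sym_space.
have upper0 (i j : 'I_n) : (i <= j)%N -> X i j = 0.
  move=> hij; have hA : (i, j) \in upper_idx by rewrite inE.
  have := congr1 (fun v : 'rV_#|upper_idx| => v 0 (enum_rank_in hA (i, j))) hproj.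
  by rewrite /= -{1}(vec_mxK u) upper_projE (enum_rankK_in hA) // => ->; rewrite mxE.
suff -> : X = 0 by rewrite raddf0.
apply/matrixP => i j; rewrite [RHS]mxE; have [hij|hji] := leqP i j; first exact: upper0.
by rewrite -symX mxE upper0 // ltnW.
Qed.

Lemma rank_sub_sym_space (B : 'M[F]_(n * n)) :
  (B <= sym_space)%MS -> (\rank B <= (n * n.+1)./2)%N.
Proof.
move=> hB; rewrite -card_upper_idx -(mxrank_mul_ker B upper_proj).
suff -> : (B :&: kermx upper_proj)%MS = 0 by rewrite mxrank0 addn0 rank_leq_col.
apply/row_matrixP => i; rewrite row0; apply: upper_proj_inj.
- by apply: submx_trans (row_sub i _) _; apply: submx_trans (capmxSl _ _) hB.
- by apply/sub_kermxP; apply: submx_trans (row_sub i _) (capmxSr _ _).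
Qed.

End Symmetric.

Section RealSpans.
Variable C : numClosedFieldType.
Variable n : nat.
Variables (Sigma Gamma : finType).
Variable U : Sigma -> 'M[C]_n.
Variable M : Gamma -> 'M[C]_n.

(* For real A, the map X |-> A^T X A commutes with transposition, hence
   preserves symmetric matrices. *)
Lemma conj_op_sym m (B : 'M[C]_(m, n * n)) A :
  real_mx A -> (B <= sym_space C n)%MS -> (B *m conj_op A <= sym_space C n)%MS.
Proof.
move=> hA; rewrite !sub_sym_space => /eqP hB.
have commute : conj_op A *m transpose_op C n = transpose_op C n *m conj_op A.
  apply/row_matrixP => i; rewrite !rowE (mulmxA _ (conj_op A)) (mulmxA _ (transpose_op _ _)).
  rewrite -(vec_mxK (delta_mx 0 i)) conj_opE !transpose_opE conj_opE adj_real //.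
  by rewrite !trmx_mul trmxK mulmxA.
by rewrite -mulmxA commute mulmxA hB.
Qed.

Lemma obs_span_sym t l : (forall s, real_mx (U s)) -> (forall g, real_mx (M g)) ->
  (obs_span U M t l <= sym_space C n)%MS.
Proof.
move=> hU hM; elim: t l => [|t IH] l.
  by rewrite /= genmxE sub_sym_space transpose_opE trmx1.
rewrite /= !addsmx_sub IH /=; apply/andP; split.
- by apply/sumsmx_subP => s _; apply: conj_op_sym.
- case: l => [|l]; first exact: sub0mx.
  by apply/sumsmx_subP => g _; apply: conj_op_sym.
Qed.

Lemma obs_span_saturated_real l : (0 < n)%N ->
  (forall s, real_mx (U s)) -> (forall g, real_mx (M g)) ->
  forall t, (obs_span U M t l <= obs_span U M ((n * n.+1)./2 - 1) l)%MS.
Proof.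
move=> n0 hU hM; apply: obs_span_saturated => // t.
apply: leq_trans (rank_sub_sym_space (obs_span_sym t l hU hM)) _.
by rewrite subn1 leqSpred.
Qed.

End RealSpans.

Section Equivalence.
Variable C : numClosedFieldType.
Variable n : nat.
Variables (Sigma Gamma : finType).
Variable U : Sigma -> 'M[C]_n.
Variable M : Gamma -> 'M[C]_n.

Lemma sum_mxvec (G : 'I_(n * n) -> C) :
  \sum_r G r = \sum_i \sum_j G (mxvec_index i j).
Proof.
rewrite pair_big /= (reindex _ (@curry_mxvec_bij n n)) /=.
by apply: eq_bigr => [[i j]] _.
Qed.

Definition trace_vec (D : 'M[C]_n) : 'cV[C]_(n * n) := (mxvec D^T)^T.

Lemma trace_vecE X D : (mxvec X *m trace_vec D) 0 0 = \tr (X *m D).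
Proof.
rewrite mxE sum_mxvec /mxtrace; apply: eq_bigr => i _; rewrite mxE.
by apply: eq_bigr => j _; rewrite !mxE !mxvecE mxE.
Qed.

Lemma trace_vec_eq0 X rs rt :
  (mxvec X *m trace_vec (rs - rt) == 0) = (\tr (X *m rs) == \tr (X *m rt)).
Proof.
have trB : \tr (X *m (rs - rt)) = \tr (X *m rs) - \tr (X *m rt).
  by rewrite mulmxBr linearB.
rewrite -[\tr (X *m rs) == _]subr_eq0 -trB -trace_vecE; apply/eqP/eqP => [-> | h]; first by rewrite mxE.
by apply/matrixP => i j; rewrite !ord1 h mxE.
Qed.

Lemma equiv_km_ann k m rs rt : qequiv_km U M k m rs rt ->
  forall w, (count is_outcome w <= k)%N -> (size w <= m)%N ->
  mxvec (word_obs U M w) *m trace_vec (rs - rt) = 0.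
Proof.
move=> H w hc hs; have := decodeP w.
case: (decode 0 w) => [[a sch] b] [hw hsch hsz hsize hcnt].
apply/eqP; rewrite trace_vec_eq0 -hw -!Pr_word_obs; apply/eqP.
by apply: H => //=; rewrite hsize hcnt hc hs.
Qed.

Lemma ann_equiv_k k rs rt :
  (forall w, (count is_outcome w <= k)%N ->
     mxvec (word_obs U M w) *m trace_vec (rs - rt) = 0) ->
  qequiv_k U M k rs rt.
Proof.
move=> H a S b _ _ hk; rewrite !Pr_word_obs; apply/eqP; rewrite -trace_vec_eq0.
by apply/eqP/H; apply: leq_trans (count_encode a 0 S b) hk.
Qed.

Lemma equiv_k_of_bounded k rs rt : (0 < n)%N ->
  (forall s, real_mx (U s)) -> (forall g, real_mx (M g)) ->
  qequiv_km U M k ((n * n.+1)./2 - 1) rs rt -> qequiv_k U M k rs rt.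
Proof.
move=> n0 hU hM H; apply: ann_equiv_k => w hc.
have span_ann := obs_span_ann (equiv_km_ann H).
have in_span :
    (mxvec (word_obs U M w) <= obs_span U M ((n * n.+1)./2 - 1) k)%MS.
  apply: submx_trans (obs_span_saturated_real k n0 hU hM (size w)).
  exact: word_obs_in_span.
by case/submxP: in_span => D ->; rewrite -mulmxA span_ann mulmx0.
Qed.

End Equivalence.

Theorem mainTheorem2 (C : numClosedFieldType) (n : nat)
  (Sigma Gamma : finType) (U : Sigma -> 'M[C]_n) (M : Gamma -> 'M[C]_n)
  (rs rt : 'M[C]_n) :
  real_QMM U M -> density rs -> density rt ->
  (forall k : nat,
     qequiv_k U M k rs rt <-> qequiv_km U M k ((n * n.+1)./2 - 1)%N rs rt) /\
  (qequiv U M rs rt <-> qequiv_m U M ((n * n.+1)./2 - 1)%N rs rt).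
Proof.
move=> [_ [hU hM]] _ _.
have [n0|n0] := posnP n.
  (* on the zero space every probability is the empty trace 0 *)
  subst n; have trivial P : equiv_restr U M P rs rt.
    by move=> a S b _ _ _; rewrite /Pr /mxtrace !big_ord0.
  by split; [move=> k; split => _ | split => _]; apply: trivial.
split=> [k|]; split => H.
- by move=> a S b hs hsz /andP[hk _]; apply: H.
- exact: equiv_k_of_bounded H.
- by move=> a S b hs hsz _; apply: H.
- (* a run with scheduler S is covered by the bounded ~_|S| equivalence *)
  move=> a S b hs hsz _.
  have HS : qequiv_km U M (size S) ((n * n.+1)./2 - 1) rs rt.
    by move=> a' S' b' hs' hsz' /andP[_ ht]; apply: H.
  exact: (equiv_k_of_bounded n0 hU hM HS hs hsz (leqnn _)).
Qed.
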